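(* Let $A$ and $B$ be C$^*$-algebras, where $A$ is unital with unit $1$. Suppose $T:A\to B$ is a linear map such that for all $a,b\in A$, $ab^*=1$ implies $T(a)T(b)^*=T(1)$. Then $T$ is continuous and $T(1)T(a)=T(a)$ for every $a\in A$. Furthermore, if $T$ is a $^*$-homomorphism at the unit of $A$, then $T$ is continuous and $T(a)T(1)=T(1)T(a)=T(a)$ for every $a\in A$.
   Context: A map $T:A\to B$ between C$^*$-algebras is a $^*$-homomorphism at $z\in A$ if for all $a,b\in A$ with $ab^*=z$ one has $T(ab^* )=T(a)T(b)^*=T(z)$, and for all $c,d\in A$ with $c^*d=z$ one has $T(c^*d)=T(c)^*T(d)=T(z)$. *)

From HB Require Import structures.
From mathcomp Require Import all_boot all_order all_algebra.
From mathcomp Require Import all_classical all_reals all_analysis.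
From mathcomp Require Import complex.
Set Implicit Arguments. Unset Strict Implicit. Unset Printing Implicit Defensive.
Import Order.TTheory GRing.Theory Num.Theory.
Import numFieldNormedType.Exports.
Local Open Scope ring_scope.
Local Open Scope complex_scope.

(* No unit is assumed. *)
Definition is_cstar_algebra (R : realType) (V : completeNormedModType R[i])
    (mul : V -> V -> V) (star : V -> V) : Prop :=
  [/\ (forall x y z, mul x (mul y z) = mul (mul x y) z),
      (forall x y z, mul (x + y) z = mul x z + mul y z),
      (forall x y z, mul x (y + z) = mul x y + mul x z),
      (forall (c : R[i]) x y, mul (c *: x) y = c *: mul x y) &
      (forall (c : R[i]) x y, mul x (c *: y) = c *: mul x y)] /\
  (forall x y, `|mul x y| <= `|x| * `|y|) /\
      [/\ (forall x y, star (x + y) = star x + star y),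
          (forall (c : R[i]) x, star (c *: x) = (c^*)%C *: star x),
          (forall x, star (star x) = x),
          (forall x y, star (mul x y) = mul (star y) (star x)) &
          (forall x, `|mul (star x) x| = `|x| ^+ 2)].

Definition star_hom_at (A B : Type) (mulA : A -> A -> A) (starA : A -> A)
    (mulB : B -> B -> B) (starB : B -> B) (T : A -> B) (z : A) : Prop :=
  (forall a b, mulA a (starA b) = z ->
     T (mulA a (starA b)) = mulB (T a) (starB (T b)) /\
     mulB (T a) (starB (T b)) = T z) /\
  (forall c d, mulA (starA c) d = z ->
     T (mulA (starA c) d) = mulB (starB (T c)) (T d) /\
     mulB (starB (T c)) (T d) = T z).

From HB Require Import structures.
From mathcomp Require Import all_boot all_order all_algebra.
From mathcomp Require Import all_classical all_reals all_analysis.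
From mathcomp Require Import complex.
From mathcomp Require Import ring lra.
Import Order.TTheory GRing.Theory Num.Theory.
Import numFieldNormedType.Exports.
Local Open Scope ring_scope.

(* Every element of norm at most 1/2 is a combination of four unitaries: it is
   h1 + i h2 with h1, h2 self-adjoint of norm at most 1/2, and such an h is the
   real part of the unitary u = h + i s, where s = 1 - l and l = (h^2 + l^2) / 2
   is the limit of a contracting iteration, so that s is self-adjoint, commutes
   with h and s^2 = 1 - h^2.
   If ab^* = 1 implies T(a) T(b)^* = T(1) =: p, then a = b = 1 shows that p is a
   projection, and for every unitary u we get |T u|^2 = |p| and
   (T u - p T u)(T u - p T u)^* = 0.  So T is bounded on the unitaries, hence
   continuous, and p T(u) = T(u) extends from the unitaries to A by linearity.
   The *-homomorphism hypothesis also gives T(u)^* T(u) = p, whence T(u) p = T(u). *)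

Set Implicit Arguments.
Unset Strict Implicit.
Unset Printing Implicit Defensive.

Section ComplexScalars.
Local Open Scope complex_scope.
Context {R : realType}.

Lemma conjc_i : 'i^* = - 'i :> R[i].
Proof. by apply/eqP; rewrite eq_complex /= oppr0 !eqxx. Qed.

Definition half : R[i] := (2^-1 : R)%:C.

Lemma conjc_half : half^* = half.
Proof. exact: conjc_real. Qed.

Lemma half_half : half + half = 1.
Proof. by rewrite /half -rmorphD /= [X in X%:C](_ : _ = 1) //; field. Qed.

End ComplexScalars.

Section RealNorm.
Local Open Scope complex_scope.
Context {R : realType} {V : normedModType R[i]}.

(* Norms over [R[i]] are real elements of [R[i]]; their real part is a real
   valued norm, for which [lra] and [nra] are available. *)
Definition rnorm (x : V) : R := complex.Re `|x|.

Lemma rnormE x : `|x| = (rnorm x)%:C.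
Proof. by rewrite /rnorm RRe_real. Qed.

Lemma rnorm_ge0 x : 0 <= rnorm x.
Proof. by rewrite -ler0c -rnormE. Qed.

Lemma rnorm0 : rnorm 0 = 0.
Proof. by rewrite /rnorm normr0. Qed.

Lemma rnorm_eq0 x : rnorm x = 0 -> x = 0.
Proof. by move=> x0; apply/eqP; rewrite -normr_eq0 rnormE x0. Qed.

Lemma rnormN x : rnorm (- x) = rnorm x.
Proof. by rewrite /rnorm normrN. Qed.

Lemma rnorm_distC x y : rnorm (x - y) = rnorm (y - x).
Proof. by rewrite -opprB rnormN. Qed.

Lemma ler_rnormD x y : rnorm (x + y) <= rnorm x + rnorm y.
Proof. by rewrite -lecR rmorphD /= -!rnormE ler_normD. Qed.

Lemma ler_rnormB x y : rnorm (x - y) <= rnorm x + rnorm y.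
Proof. by rewrite -(rnormN y) ler_rnormD. Qed.

Lemma rnormZ (c : R[i]) x : rnorm (c *: x) = complex.Re `|c| * rnorm x.
Proof. by apply: complexI; rewrite rmorphM /= -rnormE RRe_real // normrZ rnormE. Qed.

Lemma rnormZ_real (c : R) x : rnorm (c%:C *: x) = `|c| * rnorm x.
Proof. by rewrite rnormZ normc_def /= expr0n addr0 sqrtr_sqr. Qed.

Lemma rnormZ_i x : rnorm ('i *: x) = rnorm x.
Proof. by rewrite rnormZ normc_def /= expr0n add0r expr1n sqrtr1 mul1r. Qed.

Lemma rnormZ_half (x : V) : rnorm (half *: x) = 2^-1 * rnorm x.
Proof. by rewrite rnormZ_real ger0_norm. Qed.

Lemma half_twice (x : V) : half *: x + half *: x = x.
Proof. by rewrite -scalerDl half_half scale1r. Qed.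

End RealNorm.

Section Geometric.
Local Open Scope complex_scope.
Local Open Scope classical_set_scope.
Context {R : realType} {V : completeNormedModType R[i]}.
Variable q : R.
Hypotheses (q_ge0 : 0 <= q) (q_lt1 : q < 1).

Lemma exists_expr_lt d : 0 < d -> exists N, q ^+ N < d.
Proof.
move=> d_gt0.
have : (GRing.exp q : R^nat) @ \oo --> 0 by apply: cvg_expr; rewrite ger0_norm.
move=> /cvgrPdist_lt /(_ d d_gt0) [N _ qN]; exists N.
by have := qN N (leqnn N); rewrite /= sub0r normrN ger0_norm // exprn_ge0.
Qed.

Lemma rnorm_geometric_eq0 (K : R) (x : V) :
  (forall n, rnorm x <= K * q ^+ n) -> x = 0.
Proof.
move=> xK; apply: rnorm_eq0; apply/eqP; rewrite eq_le rnorm_ge0 andbT leNgt.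
apply/negP => x_gt0.
have K_gt0 : 0 < K by have := xK 0%N; rewrite expr0 mulr1; exact: lt_le_trans.
have [N qN] := exists_expr_lt (divr_gt0 x_gt0 K_gt0).
by move: qN (xK N); rewrite ltr_pdivlMr //; nra.
Qed.

Variables (C : R) (x : nat -> V).
Hypothesis x_step : forall n, rnorm (x n.+1 - x n) <= C * q ^+ n.

Let C_ge0 : 0 <= C.
Proof. by have := x_step 0%N; rewrite expr0 mulr1; apply: le_trans (rnorm_ge0 _). Qed.

Lemma rnorm_geometric_dist n m : (n <= m)%N ->
  rnorm (x m - x n) <= C * q ^+ n / (1 - q).
Proof.
have q1_gt0 : 0 < 1 - q by rewrite subr_gt0.
have partial k : rnorm (x (n + k)%N - x n) <= C * q ^+ n * (1 - q ^+ k) / (1 - q).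
  elim: k => [|k IHk]; first by rewrite addn0 subrr rnorm0 expr0 subrr mulr0 mul0r.
  have -> : x (n + k.+1)%N - x n = (x (n + k).+1 - x (n + k)%N) + (x (n + k)%N - x n).
    by rewrite addnS addrA subrK.
  apply: le_trans (ler_rnormD _ _) _; apply: le_trans (lerD (x_step _) IHk) _.
  by rewrite exprD exprS le_eqVlt; apply/orP; left; apply/eqP; field; rewrite lt0r_neq0.
move=> /subnKC <-; apply: le_trans (partial _) _.
rewrite ler_pM2r ?invr_gt0 // -[leRHS]mulr1 ler_wpM2l ?mulr_ge0 ?exprn_ge0 //.
by rewrite gerBl exprn_ge0.
Qed.

Lemma geometric_cvg : exists l, forall n, rnorm (l - x n) <= C * q ^+ n / (1 - q).
Proof.
have q1_gt0 : 0 < 1 - q by rewrite subr_gt0.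
have : cvgn x.
  apply/cauchy_cvgP/cauchy_exP => e e_gt0.
  have eE : e = (complex.Re e)%:C.
    by case: e e_gt0 => a b; rewrite ltcE /= => /andP[/eqP -> _].
  have ReE_gt0 : 0 < complex.Re e by move: e_gt0; rewrite ltcE => /andP[].
  have C1_gt0 : 0 < C + 1 by move: C_ge0; lra.
  have [N qN] := exists_expr_lt (divr_gt0 (mulr_gt0 ReE_gt0 q1_gt0) C1_gt0).
  exists (x N); exists N => // m /= Nm.
  rewrite -ball_normE /= eE -normrN opprB rnormE ltcR.
  apply: le_lt_trans (rnorm_geometric_dist Nm) _.
  have qN_ge0 := exprn_ge0 N q_ge0.
  by move: qN; rewrite ltr_pdivrMr // ltr_pdivlMr //; nra.
move=> x_cvg; exists (limn x) => n.
apply/ler_addgt0Pr => e e_gt0.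
have /cvgrPdist_lt /(_ e%:C) : x @ \oo --> limn x by [].
rewrite ltcR => /(_ e_gt0) [M _ xM].
have := xM (maxn M n) (leq_maxl _ _); rewrite rnormE ltcR => close.
have := ler_rnormD (limn x - x (maxn M n)) (x (maxn M n) - x n).
rewrite addrA subrK => /le_trans; apply.
rewrite [leRHS]addrC; apply: lerD; first exact: ltW.
exact: rnorm_geometric_dist (leq_maxr _ _).
Qed.

End Geometric.

Section CStarAlgebra.
Local Open Scope complex_scope.
Context {R : realType} {V : completeNormedModType R[i]}.
Variables (mul : V -> V -> V) (star : V -> V).
Hypothesis hV : is_cstar_algebra mul star.

Lemma cmulA x y z : mul x (mul y z) = mul (mul x y) z.
Proof. by case: hV => [[]]. Qed.

Lemma cmulDl x y z : mul (x + y) z = mul x z + mul y z.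
Proof. by case: hV => [[]]. Qed.

Lemma cmulDr x y z : mul x (y + z) = mul x y + mul x z.
Proof. by case: hV => [[]]. Qed.

Lemma cmulZl c x y : mul (c *: x) y = c *: mul x y.
Proof. by case: hV => [[]]. Qed.

Lemma cmulZr c x y : mul x (c *: y) = c *: mul x y.
Proof. by case: hV => [[]]. Qed.

Lemma ler_cnormM x y : `|mul x y| <= `|x| * `|y|.
Proof. by case: hV => _ []. Qed.

Lemma cstarD x y : star (x + y) = star x + star y.
Proof. by case: hV => _ [_ []]. Qed.

Lemma cstarZ c x : star (c *: x) = (c^*)%C *: star x.
Proof. by case: hV => _ [_ []]. Qed.

Lemma cstarK x : star (star x) = x.
Proof. by case: hV => _ [_ []]. Qed.

Lemma cstarM x y : star (mul x y) = mul (star y) (star x).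
Proof. by case: hV => _ [_ []]. Qed.

Lemma cnorm_star_mul x : `|mul (star x) x| = `|x| ^+ 2.
Proof. by case: hV => _ [_ []]. Qed.

Lemma cmul0l y : mul 0 y = 0.
Proof. by rewrite -[in LHS](scale0r (0 : V)) cmulZl scale0r. Qed.

Lemma cmul0r y : mul y 0 = 0.
Proof. by rewrite -[in LHS](scale0r (0 : V)) cmulZr scale0r. Qed.

Lemma cmulNl x y : mul (- x) y = - mul x y.
Proof. by rewrite -scaleN1r cmulZl scaleN1r. Qed.

Lemma cmulNr x y : mul x (- y) = - mul x y.
Proof. by rewrite -scaleN1r cmulZr scaleN1r. Qed.

Lemma cmulBl x y z : mul (x - y) z = mul x z - mul y z.
Proof. by rewrite cmulDl cmulNl. Qed.

Lemma cmulBr x y z : mul x (y - z) = mul x y - mul x z.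
Proof. by rewrite cmulDr cmulNr. Qed.

Lemma cstar0 : star 0 = 0.
Proof. by rewrite -[in LHS](scale0r (0 : V)) cstarZ conjc0 scale0r. Qed.

Lemma cstarN x : star (- x) = - star x.
Proof. by rewrite -scaleN1r cstarZ rmorphN1 scaleN1r. Qed.

Lemma cstarB x y : star (x - y) = star x - star y.
Proof. by rewrite cstarD cstarN. Qed.

Lemma cmul_sqrB x y : mul x x - mul y y = mul x (x - y) + mul (x - y) y.
Proof. by rewrite cmulBr cmulBl addrA subrK. Qed.

Lemma cmul_Di_Bi x y : mul x y = mul y x ->
  mul (x + 'i *: y) (x - 'i *: y) = mul x x + mul y y.
Proof.
move=> xy; rewrite cmulDl !cmulBr !cmulZl !cmulZr scalerA xy.
by rewrite addrA subrK -expr2 sqr_i scaleN1r opprK.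
Qed.

Lemma cmul_Bi_Di x y : mul x y = mul y x ->
  mul (x - 'i *: y) (x + 'i *: y) = mul x x + mul y y.
Proof.
move=> xy; rewrite cmulBl !cmulDr !cmulZl !cmulZr scalerA xy.
by rewrite opprD addrA addrK -expr2 sqr_i scaleN1r opprK.
Qed.

Lemma ler_rnormM x y : rnorm (mul x y) <= rnorm x * rnorm y.
Proof. by rewrite -lecR rmorphM /= -!rnormE ler_cnormM. Qed.

Lemma rnorm_star_mul x : rnorm (mul (star x) x) = rnorm x ^+ 2.
Proof. by apply: complexI; rewrite rmorphXn /= -!rnormE cnorm_star_mul. Qed.

(* From [|x|^2 = |x^* x| <= |x^*| |x|]. *)
Lemma rnorm_star x : rnorm (star x) = rnorm x.
Proof.
have le_star y : rnorm y <= rnorm (star y).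
  have := ler_rnormM (star y) y; rewrite rnorm_star_mul expr2.
  have [->|y_gt0] := eqVneq (rnorm y) 0; first by rewrite rnorm_ge0.
  by rewrite ler_pM2r // lt_def y_gt0 rnorm_ge0.
by apply/eqP; rewrite eq_le le_star -{2}(cstarK x) le_star.
Qed.

Lemma rnorm_mul_star x : rnorm (mul x (star x)) = rnorm x ^+ 2.
Proof. by rewrite -{1}(cstarK x) rnorm_star_mul rnorm_star. Qed.

Lemma star_mul_eq0 x : mul (star x) x = 0 -> x = 0.
Proof.
move=> x0; apply: rnorm_eq0; apply/eqP.
by rewrite -sqrf_eq0 -rnorm_star_mul x0 rnorm0.
Qed.

Lemma mul_star_eq0 x : mul x (star x) = 0 -> x = 0.
Proof.
move=> x0; apply: rnorm_eq0; apply/eqP.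
by rewrite -sqrf_eq0 -rnorm_mul_star x0 rnorm0.
Qed.

End CStarAlgebra.

Section HalfSquareIteration.
Local Open Scope complex_scope.
Context {R : realType} {V : completeNormedModType R[i]}.
Variables (mul : V -> V -> V) (star : V -> V).
Hypothesis hV : is_cstar_algebra mul star.
Variable h : V.
Hypotheses (h_sa : star h = h) (h_small : rnorm h <= 2^-1).

Let f r := half *: (mul h h + mul r r).
Let r_ n := iter n f 0.

Lemma rnorm_half_sqr_stepB a b :
  rnorm (f a - f b) <= 2^-1 * (rnorm a + rnorm b) * rnorm (a - b).
Proof.
rewrite /f -scalerBr opprD addrACA subrr add0r rnormZ_half (cmul_sqrB hV).
apply: le_trans (ler_wpM2l _ (ler_rnormD _ _)) _; first lra.
have := ler_rnormM hV a (a - b); have := ler_rnormM hV (a - b) b.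
have := rnorm_ge0 (a - b); nra.
Qed.

Lemma half_sqr_iter_invariant n :
  [/\ rnorm (r_ n) <= 4^-1, star (r_ n) = r_ n & mul h (r_ n) = mul (r_ n) h].
Proof.
elim: n => [|n [r_small r_sa r_comm]].
  by rewrite /= rnorm0 (cstar0 hV) (cmul0r hV) (cmul0l hV); split => //; lra.
rewrite [r_ _]/= -/(r_ n) /f; split.
- rewrite rnormZ_half; apply: le_trans (ler_wpM2l _ (ler_rnormD _ _)) _; first lra.
  have := ler_rnormM hV h h; have := ler_rnormM hV (r_ n) (r_ n).
  have := rnorm_ge0 h; have := rnorm_ge0 (r_ n); move: h_small r_small; nra.
- by rewrite (cstarZ hV) conjc_half (cstarD hV) !(cstarM hV) h_sa r_sa.
- rewrite (cmulZr hV) (cmulZl hV) (cmulDr hV) (cmulDl hV) !(cmulA hV) r_comm.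
  by rewrite -[mul (mul (r_ n) h) _](cmulA hV) r_comm (cmulA hV).
Qed.

Lemma half_sqr_iter_step n : rnorm (r_ n.+1 - r_ n) <= 8^-1 * 4^-1 ^+ n.
Proof.
have q_ge0 : 0 <= 4^-1 :> R by lra.
elim: n => [|n IHn].
  rewrite /= subr0 /f (cmul0l hV) addr0 rnormZ_half expr0.
  by move: h_small (rnorm_ge0 h) (ler_rnormM hV h h); nra.
apply: le_trans (rnorm_half_sqr_stepB (r_ n.+1) (r_ n)) _.
have [a_small _ _] := half_sqr_iter_invariant n.+1.
have [b_small _ _] := half_sqr_iter_invariant n.
move: IHn a_small b_small (rnorm_ge0 (r_ n.+1 - r_ n)) (exprn_ge0 n q_ge0).
by rewrite exprS; nra.
Qed.

Lemma half_sqr_fixpoint :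
  exists l, [/\ star l = l, mul h l = mul l h & l = half *: (mul h h + mul l l)].
Proof.
have q_ge0 : 0 <= 4^-1 :> R by lra.
have q_lt1 : 4^-1 < 1 :> R by lra.
have [l l_lim] := geometric_cvg q_ge0 q_lt1 half_sqr_iter_step.
have l_close n : rnorm (l - r_ n) <= 6^-1 * 4^-1 ^+ n.
  by apply: le_trans (l_lim n) _; rewrite le_eqVlt; apply/orP; left; apply/eqP; field.
have qn_ge0 n : 0 <= 4^-1 ^+ n :> R by apply: exprn_ge0.
have l_small : rnorm l <= 4^-1.
  by have := l_close 0%N; rewrite /= subr0 expr0; lra.
exists l; split; apply/eqP; rewrite -subr_eq0; apply/eqP;
  apply: (rnorm_geometric_eq0 (K := 1) q_ge0 q_lt1) => n;
  have [r_small r_sa r_comm] := half_sqr_iter_invariant n.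
- have -> : star l - l = star (l - r_ n) + (r_ n - l).
    by rewrite (cstarB hV) r_sa addrA subrK.
  apply: le_trans (ler_rnormD _ _) _; rewrite (rnorm_star hV) (rnorm_distC (r_ n)).
  by move: (l_close n) (qn_ge0 n); lra.
- have -> : mul h l - mul l h = mul h (l - r_ n) - mul (l - r_ n) h.
    by rewrite (cmulBr hV) (cmulBl hV) r_comm opprB addrA subrK.
  apply: le_trans (ler_rnormB _ _) _.
  move: (ler_rnormM hV h (l - r_ n)) (ler_rnormM hV (l - r_ n) h).
  by move: h_small (l_close n) (qn_ge0 n) (rnorm_ge0 (l - r_ n)); nra.
- have -> : l - f l = (l - r_ n.+1) + (f (r_ n) - f l) by rewrite addrA subrK.
  apply: le_trans (ler_rnormD _ _) _.
  apply: le_trans (lerD (lexx _) (rnorm_half_sqr_stepB _ _)) _.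
  rewrite (rnorm_distC (r_ n) l).
  move: r_small l_small (l_close n) (l_close n.+1) (qn_ge0 n) (rnorm_ge0 (r_ n)).
  by move: (rnorm_ge0 l) (rnorm_ge0 (l - r_ n)); rewrite exprS; nra.
Qed.

End HalfSquareIteration.

Section Unital.
Local Open Scope complex_scope.
Context {R : realType} {V : completeNormedModType R[i]}.
Variables (mul : V -> V -> V) (star : V -> V).
Hypothesis hV : is_cstar_algebra mul star.
Variable one : V.
Hypothesis hone : forall a, mul one a = a /\ mul a one = a.

Lemma cstar1 : star one = one.
Proof.
have e := congr1 star (hone (star one)).2.
rewrite (cstarM hV) !(cstarK hV) in e.
by rewrite -[RHS]e (hone _).2.
Qed.

Lemma exists_sqrt_one_sub_sqr h : star h = h -> rnorm h <= 2^-1 ->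
  exists s, [/\ star s = s, mul h s = mul s h & mul s s = one - mul h h].
Proof.
move=> h_sa h_small; have [l [l_sa hl l_fix]] := half_sqr_fixpoint hV h_sa h_small.
exists (one - l); split.
- by rewrite (cstarB hV) cstar1 l_sa.
- by rewrite (cmulBr hV) (cmulBl hV) (hone h).1 (hone h).2 hl.
- have ll : mul l l = l + l - mul h h.
    by rewrite {3 4}l_fix half_twice addrAC subrr add0r.
  rewrite (cmulBr hV) !(cmulBl hV) !(hone _).1 (hone _).2 ll.
  by rewrite opprB (addrAC (l + l)) addrK addrA subrK.
Qed.

Definition unitary u := mul u (star u) = one /\ mul (star u) u = one.

Lemma unitary_star u : unitary u -> unitary (star u).
Proof. by case=> uV Vu; split; rewrite (cstarK hV). Qed.

Lemma unitary_of_selfadjoint h : star h = h -> rnorm h <= 2^-1 ->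
  exists2 u, unitary u & h = half *: (u + star u).
Proof.
move=> h_sa h_small; have [s [s_sa hs ss]] := exists_sqrt_one_sub_sqr h_sa h_small.
have u_star : star (h + 'i *: s) = h - 'i *: s.
  by rewrite (cstarD hV) (cstarZ hV) h_sa s_sa conjc_i scaleNr.
exists (h + 'i *: s); rewrite /unitary u_star.
  by rewrite (cmul_Di_Bi hV) // (cmul_Bi_Di hV) // ss addrC subrK.
by rewrite addrACA subrr addr0 scalerDr half_twice.
Qed.

Lemma small_unitary_decomposition a : rnorm a <= 2^-1 ->
  exists u1 u2, [/\ unitary u1, unitary u2 &
    a = half *: (u1 + star u1) + 'i *: (half *: (u2 + star u2))].
Proof.
move=> a_small.
set h1 := half *: (a + star a); set h2 := half *: ('i *: (star a - a)).
have h1_sa : star h1 = h1.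
  by rewrite /h1 (cstarZ hV) conjc_half (cstarD hV) (cstarK hV) addrC.
have h2_sa : star h2 = h2.
  rewrite /h2 (cstarZ hV) conjc_half (cstarZ hV) (cstarB hV) (cstarK hV).
  by rewrite conjc_i scaleNr -scalerN opprB.
have a_star := rnorm_star hV a.
have h1_small : rnorm h1 <= 2^-1.
  by rewrite /h1 rnormZ_half; move: (ler_rnormD a (star a)); lra.
have h2_small : rnorm h2 <= 2^-1.
  by rewrite /h2 rnormZ_half rnormZ_i; move: (ler_rnormB (star a) a); lra.
have [u1 u1_unit h1E] := unitary_of_selfadjoint h1_sa h1_small.
have [u2 u2_unit h2E] := unitary_of_selfadjoint h2_sa h2_small.
exists u1, u2; split => //; rewrite -h1E -h2E /h1 /h2.
rewrite !scalerA mulrAC -expr2 sqr_i mulN1r scaleNr -scalerN opprB.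
by rewrite -scalerDr addrACA subrr addr0 scalerDr half_twice.
Qed.

End Unital.

Section RangeProjection.
Context {R : realType} {V : completeNormedModType R[i]}.
Variables (mul : V -> V -> V) (star : V -> V).
Hypothesis hV : is_cstar_algebra mul star.
Variable p : V.
Hypotheses (p_sa : star p = p) (p_idem : mul p p = p).

Lemma cmul_range_proj v : mul v (star v) = p -> mul p v = v.
Proof.
move=> vV; apply/esym/eqP; rewrite -subr_eq0; apply/eqP/(mul_star_eq0 hV).
rewrite (cstarB hV) (cstarM hV) p_sa (cmulBl hV) !(cmulBr hV).
by rewrite !(cmulA hV) vV -(cmulA hV) vV !p_idem !subrr.
Qed.

Lemma cmul_source_proj v : mul (star v) v = p -> mul v p = v.
Proof.
move=> Vv; apply/esym/eqP; rewrite -subr_eq0; apply/eqP/(star_mul_eq0 hV).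
rewrite (cstarB hV) (cstarM hV) p_sa (cmulBl hV) !(cmulBr hV).
by rewrite !(cmulA hV) Vv p_idem -(cmulA hV) Vv !p_idem !subrr.
Qed.

End RangeProjection.

Section LinearMapsOnUnitaries.
Local Open Scope complex_scope.
Context {R : realType} {A B : completeNormedModType R[i]}.
Variables (mulA : A -> A -> A) (starA : A -> A).
Hypothesis hA : is_cstar_algebra mulA starA.
Variable oneA : A.
Hypothesis hone : forall a, mulA oneA a = a /\ mulA a oneA = a.
Variable T : {linear A -> B}.

(* Rewriting with the generic [raddfD] and [linearZZ] would also act on the
   scalings inside the arguments of [T]. *)
Let TD x y : T (x + y) = T x + T y. Proof. exact: raddfD. Qed.
Let TZ c x : T (c *: x) = c *: T x. Proof. exact: linearZZ. Qed.

Lemma linear_fixed_by_unitaries (g : B -> B) :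
    {morph g : x y / x + y} -> (forall c, {morph g : x / c *: x}) ->
    (forall u, unitary mulA starA oneA u -> g (T u) = T u) ->
  forall a, g (T a) = T a.
Proof.
move=> gD gZ g_unit.
have g_small a : rnorm a <= 2^-1 -> g (T a) = T a.
  move=> /(small_unitary_decomposition hA hone) [u1 [u2 [u1_unit u2_unit ->]]].
  rewrite !TD !TZ !TD !gD !gZ !gD !g_unit //; exact: unitary_star.
move=> a; set k : R := 2 * rnorm a + 1.
have k_gt0 : 0 < k by rewrite /k; have := rnorm_ge0 a; lra.
have -> : a = k%:C *: ((k^-1)%:C *: a).
  by rewrite scalerA -rmorphM /= mulfV ?lt0r_neq0 // scale1r.
rewrite TZ gZ g_small // rnormZ_real ger0_norm ?invr_ge0 ?ltW //.
by rewrite mulrC ltr_pdivrMr // /k; have := rnorm_ge0 a; lra.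
Qed.

Lemma continuous_of_unitary_bound (K : R) :
  (forall u, unitary mulA starA oneA u -> rnorm (T u) <= K) -> continuous T.
Proof.
move=> T_unit; apply/bounded_linear_continuous/ex_bound.
exists (2 * K)%:C; apply/nbhs_norm0P; exists (2^-1 : R)%:C.
  by rewrite /= ltcE /= eqxx /=; lra.
move=> a /=; rewrite !rnormE ltcR lecR => /ltW a_small.
have [u1 [u2 [u1_unit u2_unit ->]]] := small_unitary_decomposition hA hone a_small.
rewrite !TD !TZ !TD; apply: le_trans (ler_rnormD _ _) _.
rewrite rnormZ_i !rnormZ_half; move: (ler_rnormD (T u1) (T (starA u1))).
move: (ler_rnormD (T u2) (T (starA u2))) (T_unit _ u1_unit) (T_unit _ u2_unit).
by move: (T_unit _ (unitary_star hA u1_unit)) (T_unit _ (unitary_star hA u2_unit)); lra.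
Qed.

Variables (mulB : B -> B -> B) (starB : B -> B).
Hypothesis hB : is_cstar_algebra mulB starB.
Hypothesis T_mul_star : forall a b, mulA a (starA b) = oneA ->
  mulB (T a) (starB (T b)) = T oneA.

Let T1_mul_star : mulB (T oneA) (starB (T oneA)) = T oneA.
Proof. by apply: T_mul_star; rewrite (cstar1 hA hone) (hone _).1. Qed.

Lemma T1_selfadjoint : starB (T oneA) = T oneA.
Proof. by rewrite -{1}T1_mul_star (cstarM hB) (cstarK hB) T1_mul_star. Qed.

Lemma T1_idem : mulB (T oneA) (T oneA) = T oneA.
Proof. by rewrite -{2}T1_selfadjoint T1_mul_star. Qed.

Lemma continuous_of_mul_star_one : continuous T.
Proof.
apply: (@continuous_of_unitary_bound (1 + rnorm (T oneA))) => u [uV _].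
have := rnorm_mul_star hB (T u); rewrite T_mul_star //.
by move: (rnorm_ge0 (T u)); nra.
Qed.

Lemma mulT1T a : mulB (T oneA) (T a) = T a.
Proof.
apply: (linear_fixed_by_unitaries (g := mulB (T oneA))).
- by move=> x y; rewrite (cmulDr hB).
- by move=> c x; rewrite (cmulZr hB).
- move=> u [uV _]; apply: (cmul_range_proj hB T1_selfadjoint T1_idem).
  exact: T_mul_star.
Qed.

Hypothesis T_star_mul : forall c d, mulA (starA c) d = oneA ->
  mulB (starB (T c)) (T d) = T oneA.

Lemma mulTT1 a : mulB (T a) (T oneA) = T a.
Proof.
apply: (linear_fixed_by_unitaries (g := mulB^~ (T oneA))).
- by move=> x y; rewrite (cmulDl hB).
- by move=> c x; rewrite (cmulZl hB).
- move=> u [_ Vu]; apply: (cmul_source_proj hB T1_selfadjoint T1_idem).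
  exact: T_star_mul.
Qed.

End LinearMapsOnUnitaries.

Theorem proposition2p4 (R : realType)
    (A : completeNormedModType R[i]) (mulA : A -> A -> A) (starA : A -> A)
    (B : completeNormedModType R[i]) (mulB : B -> B -> B) (starB : B -> B)
    (hA : is_cstar_algebra mulA starA) (hB : is_cstar_algebra mulB starB)
    (oneA : A) (hone : forall a, mulA oneA a = a /\ mulA a oneA = a)
    (T : {linear A -> B}) :
  ((forall a b, mulA a (starA b) = oneA ->
       mulB (T a) (starB (T b)) = T oneA) ->
     continuous T /\ (forall a, mulB (T oneA) (T a) = T a)) /\
  (star_hom_at mulA starA mulB starB T oneA ->
     continuous T /\
     (forall a, mulB (T a) (T oneA) = T a /\ mulB (T oneA) (T a) = T a)).
Proof.
split=> [T_mul_star | [T_mul_star T_star_mul]].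
  split; first exact (continuous_of_mul_star_one hA hone hB T_mul_star).
  exact (mulT1T hA hone hB T_mul_star).
have {}T_mul_star a b ab := (T_mul_star a b ab).2.
have {}T_star_mul c d cd := (T_star_mul c d cd).2.
split; first exact (continuous_of_mul_star_one hA hone hB T_mul_star).
move=> a; split; first exact (mulTT1 hA hone hB T_mul_star T_star_mul a).
exact (mulT1T hA hone hB T_mul_star a).
Qed.
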